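(* Let $G$ be a finite simple connected graph on $n$ vertices and $w:E(G)\to\mathbb{R}_{>0}$ a positive edge-weighting. For each edge $e$ define $C_w(e)$ as the maximum of $w(C)=\sum_{f\in E(C)}w(f)$ over all cycles $C\subseteq G$ containing $e$ if $e$ lies on a cycle, and $C_w(e)=2w(e)$ if $e$ is a bridge. Let $F=\{e\in E(G): C_w(e)<2w(e)\}$. Then the edge set $F$ contains no cycle; in particular $|F|\le n-1$.
   Context: A bridge is an edge lying on no cycle. *)

(* A finite simple graph is a symmetric irreflexive
   relation g on a finType T; edges are 2-element vertex sets {x,y}. *)
From mathcomp Require Import all_boot all_order all_algebra.
Set Implicit Arguments. Unset Strict Implicit. Unset Printing Implicit Defensive.
Import Order.TTheory GRing.Theory Num.Theory.
Local Open Scope ring_scope.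

Section Graphs.
Variable T : finType.
Variable g : rel T.

Definition is_edge (E : {set T}) : bool :=
  [exists x, exists y, g x y && (E == [set x; y])].

Definition is_gcycle (c : seq T) : bool := ucycleb g c && (2 < size c)%N.

Definition cycle_edges (c : seq T) : {set {set T}} :=
  [set [set x; next c x] | x in c].

Variable R : realFieldType.
Variable w : {set T} -> R.

Definition cycle_weight (c : seq T) : R := \sum_(E in cycle_edges c) w E.

Definition Cw (E : {set T}) (m : R) : Prop :=
  ((exists c, is_gcycle c /\ E \in cycle_edges c /\ cycle_weight c = m) /\
   (forall c, is_gcycle c -> E \in cycle_edges c -> cycle_weight c <= m))
  \/
  ((forall c, is_gcycle c -> E \notin cycle_edges c) /\ m = 2 * w E).

End Graphs.

(* If every edge of a cycle C is in F, then w(C) <= C_w(e) < 2 w(e) for each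
   edge e of C; adding this for two distinct edges e, e' of C gives
   w(e) + w(e') <= w(C) < w(e) + w(e'). So F is a forest, and a forest with k
   edges on n vertices has n - k >= 1 components: deleting an edge {a, b}
   whose endpoints are not otherwise joined splits one component into two. *)
From mathcomp Require Import all_boot all_order all_algebra.
From mathcomp Require Import lra zify.
Set Implicit Arguments. Unset Strict Implicit. Unset Printing Implicit Defensive.
Import Order.TTheory GRing.Theory Num.Theory.

Section Forests.
Variable T : finType.
Implicit Types (F : {set {set T}}) (a b x y : T) (c : seq T).

Definition edge_rel F : rel T := fun x y => [set x; y] \in F.

Definition component F x : {set T} := [set y | connect (edge_rel F) x y].

Definition components F : {set {set T}} := [set component F x | x : T].

Definition acyclic F : Prop :=
  forall c, uniq c -> 2 < size c -> ~~ cycle (edge_rel F) c.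

Lemma edge_rel_sym F : symmetric (edge_rel F).
Proof. by move=> x y; rewrite /edge_rel setUC. Qed.

Lemma connect_edge_rel_sym F : connect_sym (edge_rel F).
Proof. exact/sym_connect_sym/edge_rel_sym. Qed.

Lemma edge_rel_subset F0 F : F0 \subset F -> subrel (edge_rel F0) (edge_rel F).
Proof. by move=> /subsetP sF0F x y /sF0F. Qed.

Lemma acyclic_subset F0 F : F0 \subset F -> acyclic F -> acyclic F0.
Proof.
move=> sF0F acF c uc sz; apply: contra (acF c uc sz).
exact/sub_cycle/edge_rel_subset.
Qed.

Lemma mem_component F x : x \in component F x.
Proof. by rewrite inE connect0. Qed.

Lemma eq_component F x y :
  connect (edge_rel F) x y -> component F x = component F y.
Proof.
by move=> cxy; apply/setP => z; rewrite !inE (same_connect (connect_edge_rel_sym F) cxy).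
Qed.

Lemma bigcup_component F0 F x : F0 \subset F ->
  \bigcup_(y in component F0 x) component F y = component F x.
Proof.
move=> sF0F; apply/setP => z; apply/bigcupP/idP => [[y yF0x zFy]|xz].
  move: yF0x zFy; rewrite !inE => cxy; apply: connect_trans.
  by apply: connect_sub cxy => u v /(edge_rel_subset sF0F) /connect1.
by exists x; rewrite ?mem_component.
Qed.

Lemma card_components F : #|components F| <= #|T|.
Proof. exact: leq_trans (leq_imset_card _ _) (max_card _). Qed.

Lemma components_gt0 F : 0 < #|T| -> 0 < #|components F|.
Proof.
by case/card_gt0P => x _; apply/card_gt0P; exists (component F x); apply: imset_f.
Qed.

(* Components of [F :\ e] are mapped onto those of [F] by taking unions of
   [F]-components; the two distinct components of [a] and [b] have the same
   image, so dropping one of them keeps the map onto. *)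
Lemma card_components_delete_edge F a b :
  [set a; b] \in F -> ~~ connect (edge_rel (F :\ [set a; b])) a b ->
  #|components F| < #|components (F :\ [set a; b])|.
Proof.
set F0 := F :\ _ => abF not_ab.
have sF0F : F0 \subset F by apply: subsetDl.
pose merge (C : {set T}) := \bigcup_(y in C) component F y.
have mergeE x : merge (component F0 x) = component F x.
  exact: bigcup_component x sF0F.
have Fab : component F a = component F b by apply/eq_component/connect1.
have F0ab : component F0 b != component F0 a.
  by apply: contraNneq not_ab => F0ba; have := mem_component F0 b; rewrite F0ba inE.
have onto : components F \subset merge @: (components F0 :\ component F0 a).
  apply/subsetP => _ /imsetP [x _ ->]; apply/imsetP.
  have [F0xa | F0xa] := eqVneq (component F0 x) (component F0 a).
    exists (component F0 b); first by rewrite !inE F0ab imset_f.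
    by rewrite mergeE -Fab -mergeE F0xa.
  by exists (component F0 x); rewrite ?mergeE // !inE F0xa imset_f.
have F0a : component F0 a \in components F0 by apply: imset_f.
rewrite (cardsD1 (component F0 a) (components F0)) F0a add1n ltnS.
exact: leq_trans (subset_leq_card onto) (leq_imset_card _ _).
Qed.

Lemma cycle_of_connect_delete_edge F a b :
  [set a; b] \in F -> a != b -> connect (edge_rel (F :\ [set a; b])) a b ->
  exists2 c, uniq c & (2 < size c) && cycle (edge_rel F) c.
Proof.
move=> abF neq_ab /connectP [p ab_p b_last].
case: (shortenP ab_p) b_last => q ab_q uniq_q _ b_last.
have sub_rel := edge_rel_subset (subsetDl F [set [set a; b]]).
exists (a :: q) => //; apply/andP; split.
  case: q ab_q uniq_q b_last => [|y [|z q]] //= ab_q _ b_last.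
    by move: neq_ab; rewrite b_last eqxx.
  by move: ab_q; rewrite andbT -b_last /edge_rel !inE eqxx.
by rewrite /= rcons_path (sub_path sub_rel ab_q) -b_last edge_rel_sym.
Qed.

Lemma forest_card F : (forall E, E \in F -> #|E| = 2) -> acyclic F ->
  #|F| + #|components F| <= #|T|.
Proof.
have [n] := ubnP #|F|; elim: n F => // n IH F ltFn F2 acF.
have [->|[e eF]] := set_0Vmem F; first by rewrite cards0 card_components.
have /cards2P [a [b [neq_ab def_e]]] : #|e| == 2 by rewrite F2.
subst e; set F0 := F :\ [set a; b].
have sF0F : F0 \subset F by apply: subsetDl.
have not_ab : ~~ connect (edge_rel F0) a b.
  apply/negP => /(cycle_of_connect_delete_edge eF neq_ab) [c uc /andP [sz cyc]].
  by move: (acF c uc sz); rewrite cyc.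
have F0_2 E : E \in F0 -> #|E| = 2 by move=> /setD1P [_ /F2].
rewrite (cardsD1 [set a; b] F) eF add1n in ltFn *.
have := IH F0 ltFn F0_2 (acyclic_subset sF0F acF).
have := card_components_delete_edge eF not_ab.
by move=> lt_comp; apply: leq_trans; rewrite addSn -addnS leq_add2l.
Qed.

Lemma acyclic_card F : (forall E, E \in F -> #|E| = 2) -> acyclic F ->
  #|F| <= #|T| - 1.
Proof.
move=> F2 acF; have := forest_card F2 acF.
have [T0|/components_gt0] := posnP #|T|; first by rewrite T0; lia.
by move=> /(_ F); lia.
Qed.

End Forests.

Lemma set2_eq_set2 (T : finType) (x y u v : T) :
  [set x; y] = [set u; v] -> (x = u /\ y = v) \/ (x = v /\ y = u).
Proof.
move=> xy_uv.
have /set2P xuv : x \in [set u; v] by rewrite -xy_uv set21.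
have /set2P yuv : y \in [set u; v] by rewrite -xy_uv set22.
have /set2P uxy : u \in [set x; y] by rewrite xy_uv set21.
have /set2P vxy : v \in [set x; y] by rewrite xy_uv set22.
by case: xuv yuv uxy vxy => ? [] ? [] ? [] ?; subst; by [left | right].
Qed.

Section GraphEdges.
Variables (T : finType) (g : rel T).
Hypotheses (g_sym : symmetric g) (g_irr : irreflexive g).
Implicit Types (E : {set T}) (F : {set {set T}}) (c : seq T).

Lemma is_edge_set2 x y : is_edge g [set x; y] -> g x y.
Proof.
case/existsP=> u /existsP [v /andP [guv /eqP /set2_eq_set2]].
by case=> [[-> ->] | [-> ->]]; rewrite // g_sym.
Qed.

Lemma card_is_edge E : is_edge g E -> #|E| = 2.
Proof.
case/existsP=> x /existsP [y /andP [gxy /eqP ->]].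
by rewrite cards2; case: eqVneq gxy => // ->; rewrite g_irr.
Qed.

Lemma acyclic_of_no_gcycle F : (forall E, E \in F -> is_edge g E) ->
  (forall c, is_gcycle g c -> ~ cycle_edges c \subset F) -> acyclic F.
Proof.
move=> Fg noF c uc sz; apply/negP => cycF.
have gF : subrel (edge_rel F) g by move=> x y /Fg /is_edge_set2.
apply: (noF c); first by rewrite /is_gcycle /ucycleb (sub_cycle gF cycF) uc.
by apply/subsetP => _ /imsetP [x xc ->]; apply: next_cycle cycF xc.
Qed.

Lemma is_edge_cycle_edges c E : cycle g c -> E \in cycle_edges c -> is_edge g E.
Proof.
move=> cyc /imsetP [x xc ->]; apply/existsP; exists x; apply/existsP.
by exists (next c x); rewrite (next_cycle cyc xc) eqxx.
Qed.

Lemma size_le_card_cycle_edges c : uniq c -> size c <= 2 * #|cycle_edges c|.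
Proof.
move=> uc; rewrite -(card_uniqP uc).
have sub : c \subset cover (cycle_edges c).
  apply/subsetP => x xc; apply/bigcupP; exists [set x; next c x]; last exact: set21.
  exact: imset_f.
apply: leq_trans (subset_leq_card sub) _.
apply: leq_trans (leq_card_cover _) _.
rewrite mulnC -sum_nat_const leq_sum // => _ /imsetP [x _ ->].
by rewrite cards2; case: eqP.
Qed.

Lemma cycle_edges_gt1 c : is_gcycle g c -> 1 < #|cycle_edges c|.
Proof.
case/andP=> /andP [_ uc] sz; have := size_le_card_cycle_edges uc; lia.
Qed.

End GraphEdges.

Local Open Scope ring_scope.

Lemma sum_ge_two_terms (R : numDomainType) (I : finType) (P : {set I})
    (f : I -> R) i j :
  (forall k, k \in P -> 0 <= f k) -> i \in P -> j \in P -> i != j ->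
  f i + f j <= \sum_(k in P) f k.
Proof.
move=> f_ge0 Pi Pj neq_ij.
rewrite (bigD1 i) // (bigD1 j) /=; last by rewrite Pj eq_sym.
rewrite addrA lerDl sumr_ge0 // => k /andP [/andP [Pk _] _].
exact: f_ge0.
Qed.

Section LightEdges.
Variables (T : finType) (g : rel T) (R : realFieldType) (w : {set T} -> R).
Implicit Types (E : {set T}) (c : seq T).

Lemma Cw_ge_cycle_weight E m c :
  Cw g w E m -> is_gcycle g c -> E \in cycle_edges c -> cycle_weight w c <= m.
Proof.
case=> [[_ max_m] | [bridge _]] cc Ec; first exact: max_m.
by case/negP: (bridge c cc).
Qed.

Lemma light_edges_acyclic (F : {set {set T}}) :
  (forall E, is_edge g E -> 0 <= w E) ->
  (forall E, E \in F -> exists m, Cw g w E m /\ m < 2 * w E) ->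
  forall c, is_gcycle g c -> ~ cycle_edges c \subset F.
Proof.
move=> w_ge0 light c cc /subsetP cF.
have heavy E : E \in cycle_edges c -> cycle_weight w c < 2 * w E.
  move=> Ec; have [m [Cw_m lt_m]] := light E (cF E Ec).
  exact: le_lt_trans (Cw_ge_cycle_weight Cw_m cc Ec) lt_m.
have wc_ge0 E : E \in cycle_edges c -> 0 <= w E.
  by move=> Ec; apply/w_ge0/(is_edge_cycle_edges _ Ec); case/andP: cc => /andP [].
have [e [e' [ec e'c neq_ee']]] := card_gt1P (cycle_edges_gt1 cc).
have := sum_ge_two_terms wc_ge0 ec e'c neq_ee'.
have := heavy e ec; have := heavy e' e'c; rewrite /cycle_weight; lra.
Qed.

End LightEdges.

Theorem corollary4p3 (T : finType) (g : rel T) (R : realFieldType)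
  (w : {set T} -> R) (F : {set {set T}}) :
  symmetric g -> irreflexive g ->
  (forall x y : T, connect g x y) ->
  (forall E, is_edge g E -> 0 < w E) ->
  (forall E, E \in F <->
     (is_edge g E /\ exists m, Cw g w E m /\ m < 2 * w E)) ->
  (forall c : seq T, is_gcycle g c -> ~ (cycle_edges c \subset F)) /\
  (#|F| <= #|T| - 1)%N.
Proof.
move=> g_sym g_irr _ w_gt0 defF.
have Fg E : E \in F -> is_edge g E by case/defF.
have acF : forall c, is_gcycle g c -> ~ cycle_edges c \subset F.
  by apply: (light_edges_acyclic (w := w)) => [E /w_gt0 /ltW | E /defF []].
split=> //; apply: acyclic_card (acyclic_of_no_gcycle g_sym Fg acF).
by move=> E /Fg; apply: card_is_edge.
Qed.
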